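(* The element $(\mathcal{X}^2)^4\in\Lambda$ is a nonzero element of maximal rank, i.e. $(\mathcal{X}^2)^4=c\,\prod_{a,A}\psi^a_A\prod_{a,A}\overline{\psi^a_A}$ (product of all 24 generators in a fixed order) with $c\neq0$.
   Context: Colour indices $A,B,\dots\in\{1,2,3\}$; bispinor indices $a,b,\dots\in\{1,2,\dot1,\dot2\}$; summation over repeated indices; spacetime indices raised/lowered with $\eta=\mathrm{diag}(1,-1,-1,-1)$. $\Lambda$ is the complex Grassmann algebra generated by the 24 anticommuting generators $\psi^a_A,\overline{\psi^a_A}$. $g^{AB}=\delta^{AB}$. Spinor structures: $\sigma^\mu=(I,\sigma^1,\sigma^2,\sigma^3)$, $\tilde\sigma^\mu=(I,-\sigma^k)$; in the ordering $(1,2,\dot1,\dot2)$, $(\gamma^\mu)^a{}_b=\begin{pmatrix}0&\tilde\sigma^\mu\\ \sigma^\mu&0\end{pmatrix}$, $\epsilon_{ab}=\begin{pmatrix}\varepsilon&0\\0&-\varepsilon\end{pmatrix}$ with $\varepsilon=\begin{pmatrix}0&1\\-1&0\end{pmatrix}$, $(\gamma^\mu)_{cb}:=(\gamma^\mu)^a{}_b\epsilon_{ac}$, $\beta_{ab}=\begin{pmatrix}0&I_2\\ I_2&0\end{pmatrix}$, and $\beta_{abcd}:=\tfrac12\overline{(\gamma_\mu)_{ab}}(\gamma^\mu)_{cd}$. Define $\mathcal{J}^{ab}:=\overline{\psi^a_A}g^{AB}\psi^b_B$ and $\mathcal{X}^2:=4\beta_{bcef}\beta_{ad}\{\mathcal{J}^{ad}\mathcal{J}^{be}\mathcal{J}^{cf}+2\mathcal{J}^{ae}\mathcal{J}^{bf}\mathcal{J}^{cd}\}$.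 *)

From HB Require Import structures.
From mathcomp Require Import all_boot all_order all_algebra.
Set Implicit Arguments. Unset Strict Implicit. Unset Printing Implicit Defensive.
Import Order.TTheory GRing.Theory Num.Theory.
Local Open Scope ring_scope.

Section Grassmann.
Variable C : numClosedFieldType.

(* An element of Lambda: coefficients on the monomial basis e_S, S a subset
   of the 24 generators, e_S = product of generators of S in increasing order. *)
Notation Lam := {ffun {set 'I_24} -> C}.

(* sign of reordering e_A e_B into e_(A :|: B) for disjoint A, B *)
Definition gsign (A B : {set 'I_24}) : C :=
  (-1) ^+ #|[set p : 'I_24 * 'I_24 | [&& p.1 \in A, p.2 \in B & (p.2 < p.1)%N]]|.

Definition gmul (x y : Lam) : Lam :=
  [ffun S : {set 'I_24} => \sum_(A : {set 'I_24} | A \subset S)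
                gsign A (S :\: A) * x A * y (S :\: A)].

Definition gone : Lam := [ffun S : {set 'I_24} => if S == set0 then 1 else 0].
Definition gen (i : 'I_24) : Lam := [ffun S : {set 'I_24} => if S == [set i] then 1 else 0].
Definition gscale (k : C) (x : Lam) : Lam := [ffun S : {set 'I_24} => k * x S].
Definition gpow (n : nat) (x : Lam) : Lam := iter n (gmul x) gone.

(* generators: psi^a_A  |-> index 3a+A,  bar psi^a_A |-> 12+3a+A
   (bispinor order (1,2,1dot,2dot) = 0..3, colour 1..3 = 0..2) *)
Definition psi (a : 'I_4) (A : 'I_3) : Lam := gen (inord (3 * a + A)).
Definition psibar (a : 'I_4) (A : 'I_3) : Lam := gen (inord (12 + 3 * a + A)).

Definition topprod : Lam :=
  foldr gmul gone
    ([seq psi a A | a <- enum 'I_4, A <- enum 'I_3] ++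
     [seq psibar a A | a <- enum 'I_4, A <- enum 'I_3]).

Definition sigma (mu i j : nat) : C :=
  match mu, i, j with
  | 0, 0, 0 => 1 | 0, 1, 1 => 1
  | 1, 0, 1 => 1 | 1, 1, 0 => 1
  | 2, 0, 1 => - 'i | 2, 1, 0 => 'i
  | 3, 0, 0 => 1 | 3, 1, 1 => -1
  | _, _, _ => 0
  end.
Definition sigmat (mu i j : nat) : C :=
  if mu == 0%N then sigma mu i j else - sigma mu i j.

(* (gamma^mu)^a_b = [[0, sigmat^mu],[sigma^mu, 0]] *)
Definition gammaU (mu : 'I_4) (a b : 'I_4) : C :=
  if (a < 2)%N && (2 <= b)%N then sigmat mu a (b - 2)
  else if (2 <= a)%N && (b < 2)%N then sigma mu (a - 2) b
  else 0.

Definition eps2 (i j : nat) : C :=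
  match i, j with 0, 1 => 1 | 1, 0 => -1 | _, _ => 0 end.
(* epsilon_ab = diag(eps, -eps) *)
Definition epsB (a b : 'I_4) : C :=
  if (a < 2)%N && (b < 2)%N then eps2 a b
  else if (2 <= a)%N && (2 <= b)%N then - eps2 (a - 2) (b - 2)
  else 0.

(* (gamma^mu)_{cb} := (gamma^mu)^a_b epsilon_{ac} *)
Definition gammaL (mu c b : 'I_4) : C := \sum_(a < 4) gammaU mu a b * epsB a c.
Definition eta (mu : 'I_4) : C := if mu == 0 :> nat then 1 else -1.
(* (gamma_mu)_{cb} : spacetime index lowered with eta *)
Definition gammaLlow (mu c b : 'I_4) : C := eta mu * gammaL mu c b.

Definition beta4 (a b c d : 'I_4) : C :=
  2^-1 * \sum_(mu < 4) Num.conj (gammaLlow mu a b) * gammaL mu c d.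
(* beta_ab = [[0, I],[I, 0]] *)
Definition beta2 (a b : 'I_4) : C :=
  if ((a : nat) == b + 2)%N || ((b : nat) == a + 2)%N then 1 else 0.

Definition J (a b : 'I_4) : Lam := \sum_(A < 3) gmul (psibar a A) (psi b A).

Definition X2 : Lam :=
  gscale 4 (\sum_(a < 4) \sum_(b < 4) \sum_(c < 4) \sum_(d < 4) \sum_(e < 4) \sum_(f < 4)
    gscale (beta4 b c e f * beta2 a d)
      (gmul (gmul (J a d) (J b e)) (J c f)
       + gscale 2 (gmul (gmul (J a e) (J b f)) (J c d)))).

End Grassmann.

From Pilot Require Import Defs.
From mathcomp Require Import all_boot all_order all_algebra.
From Stdlib Require Import BinInt.
From mathcomp Require Import ssrZ ring zify.
Import GRing.Theory Num.Theory.
Set Implicit Arguments. Unset Strict Implicit. Unset Printing Implicit Defensive.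

(* Lambda has the basis e_S, S a set of generators, with e_A e_B = +-e_(A u B)
   for disjoint A, B and 0 otherwise.  All the coefficients entering X^2 are
   integers: beta_ab visibly, and beta_abcd because it is half of an even,
   real Gaussian integer.  Hence X^2 and its powers are integer combinations
   of monomials, which can be multiplied exactly by an executable version of
   the product rule, with monomials encoded as 24-bit vectors.  Running it
   gives (X^2)^4 = 16307453952 e_all, while the ordered product of all
   generators is e_all itself.  Both computations are transported to Lambda
   by showing that every executable operation is sound. *)

Fixpoint disjoint_bits n (s t : seq bool) : bool :=
  if n is n'.+1 then
    ~~ (head false s && head false t) && disjoint_bits n' (behead s) (behead t)
  else true.

Fixpoint or_bits n (s t : seq bool) : seq bool :=
  if n is n'.+1 then (head false s || head false t) :: or_bits n' (behead s) (behead t)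
  else [::].

(* [k] is the number of set bits of [t] that precede the current position. *)
Fixpoint inversions n (s t : seq bool) (k : nat) : nat :=
  if n is n'.+1 then
    (if head false s then k else 0) + inversions n' (behead s) (behead t) (k + head false t)
  else 0.

Definition set_of_bits n (s : seq bool) : {set 'I_n} := [set i : 'I_n | nth false s i].

Definition bit n (i : nat) : seq bool := mkseq (fun j => j == i) n.

Lemma disjoint_bits_nth n s t :
  disjoint_bits n s t = all (fun i => ~~ (nth false s i && nth false t i)) (iota 0 n).
Proof.
elim: n s t => [//|n IHn] s t /=.
rewrite IHn -add1n iotaDl all_map; congr (_ && _).
by apply: eq_all => i /=; rewrite !nth_behead.
Qed.

Lemma nth_or_bits n s t i :
  nth false (or_bits n s t) i = (i < n) && (nth false s i || nth false t i).
Proof.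
elim: n s t i => [|n IHn] s t i; first by rewrite nth_nil.
case: i => [|i] /=; first by case: s; case: t.
by rewrite IHn !nth_behead.
Qed.

Lemma inversions_sum n s t k : inversions n s t k =
  \sum_(i < n) nth false s i * (k + \sum_(j < i) nth false t j).
Proof.
elim: n s t k => [|n IHn] s t k; first by rewrite big_ord0.
rewrite big_ord_recl /= IHn big_ord0 addn0; congr addn.
  by case: s => [|[] ?] /=; rewrite ?mul1n ?mul0n.
apply: eq_bigr => i _; rewrite /bump /= add1n big_ord_recl !nth_behead addnA /=.
have -> : head false t = nth false t 0 by case: t.
by congr (_ * (_ + _)); apply: eq_bigr => j _; rewrite nth_behead /bump add1n.
Qed.

Lemma disjoint_bitsE n s t :
  disjoint_bits n s t = [disjoint set_of_bits n s & set_of_bits n t].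
Proof.
rewrite disjoint_bits_nth -setI_eq0; apply/idP/idP.
  move/allP => st; apply/eqP/setP => i; rewrite !inE.
  by apply/negbTE/st; rewrite mem_iota add0n ltn_ord.
move/eqP/setP => st; apply/allP => i; rewrite mem_iota add0n => /andP[_ lt_in].
by have := st (Ordinal lt_in); rewrite !inE /= => ->.
Qed.

Lemma set_of_or_bits n s t :
  set_of_bits n (or_bits n s t) = set_of_bits n s :|: set_of_bits n t.
Proof. by apply/setP => i; rewrite !inE nth_or_bits ltn_ord. Qed.

Lemma card_inversions n s t :
  #|[set p : 'I_n * 'I_n |
      [&& p.1 \in set_of_bits n s, p.2 \in set_of_bits n t & (p.2 < p.1)%N]]|
  = inversions n s t 0.
Proof.
rewrite inversions_sum.
have prefixE (i : 'I_n) :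
    \sum_(j < i) nth false t j = \sum_(j < n) (j < i) * nth false t j.
  rewrite (big_ord_widen n (fun j => nat_of_bool (nth false t j)) (ltnW (ltn_ord i))).
  by rewrite big_mkcond; apply: eq_bigr => j _; case: (j < i)%N; rewrite ?mul1n ?mul0n.
under eq_bigr => i _ do rewrite add0n prefixE big_distrr.
rewrite pair_bigA /= -sum1_card big_mkcond /=.
apply: eq_bigr => [[i j]] _ /=; rewrite !inE.
by case: (nth false s i); case: (nth false t j); case: (j < i)%N.
Qed.

Lemma set_of_bit n (i : 'I_n) : set_of_bits n (bit n i) = [set i].
Proof. by apply/setP => j; rewrite !inE nth_mkseq. Qed.

Lemma set_of_bits0 n : set_of_bits n (nseq n false) = set0.
Proof. by apply/setP => j; rewrite !inE nth_nseq if_same. Qed.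

(* [(k, s)] stands for k e_S, S being the set of positions of [true] in [s]. *)
Definition spoly := seq (Z * seq bool).

Definition sign_bits (s t : seq bool) : Z :=
  if odd (inversions 24 s t 0) then (-1)%Z else 1%Z.

Definition mul_term (x y : Z * seq bool) : Z * seq bool :=
  if disjoint_bits 24 x.2 y.2 then ((sign_bits x.2 y.2 * x.1 * y.1)%Z, or_bits 24 x.2 y.2)
  else (0%Z, x.2).

Definition mul_raw (p q : spoly) : spoly := [seq mul_term x y | x <- p, y <- q].

Fixpoint bits_le (s t : seq bool) : bool :=
  match s, t with
  | b :: s', c :: t' => if b == c then bits_le s' t' else c
  | [::], _ => true
  | _ :: _, [::] => false
  end.

Fixpoint collect (x : Z * seq bool) (p : spoly) : spoly :=
  if p is y :: p' then
    if x.2 == y.2 then collect ((x.1 + y.1)%Z, x.2) p' else x :: collect y p'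
  else [:: x].

Definition nonzero_term (x : Z * seq bool) : bool := ~~ Z.eqb x.1 0.

Definition normalize (p : spoly) : spoly :=
  filter nonzero_term
    (if sort (fun x y => bits_le x.2 y.2) (filter nonzero_term p) is x :: p'
     then collect x p' else [::]).

Definition mul_spoly (p q : spoly) : spoly := normalize (mul_raw p q).

Definition scale_spoly (k : Z) (p : spoly) : spoly := [seq ((k * x.1)%Z, x.2) | x <- p].

Definition sum_spoly (I : Type) (s : seq I) (F : I -> spoly) : spoly := flatten (map F s).

Definition one_spoly : spoly := [:: (1%Z, nseq 24 false)].

Definition gauss := (Z * Z)%type.

Definition gauss_add (x y : gauss) : gauss := ((x.1 + y.1)%Z, (x.2 + y.2)%Z).
Definition gauss_mul (x y : gauss) : gauss :=
  ((x.1 * y.1 - x.2 * y.2)%Z, (x.1 * y.2 + x.2 * y.1)%Z).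
Definition gauss_opp (x : gauss) : gauss := ((- x.1)%Z, (- x.2)%Z).
Definition gauss_scale (k : Z) (x : gauss) : gauss := ((k * x.1)%Z, (k * x.2)%Z).
Definition gauss_conj (x : gauss) : gauss := (x.1, (- x.2)%Z).
Definition gauss_sum (s : seq gauss) : gauss := foldr gauss_add (0%Z, 0%Z) s.

Definition ord4 : seq 'I_4 :=
  [:: @Ordinal 4 0 isT; @Ordinal 4 1 isT; @Ordinal 4 2 isT; @Ordinal 4 3 isT].
Definition ord3 : seq 'I_3 := [:: @Ordinal 3 0 isT; @Ordinal 3 1 isT; @Ordinal 3 2 isT].

Lemma enum_ord4 : enum 'I_4 = ord4.
Proof. by apply: (inj_map val_inj); rewrite val_enum_ord. Qed.

Lemma enum_ord3 : enum 'I_3 = ord3.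
Proof. by apply: (inj_map val_inj); rewrite val_enum_ord. Qed.

Definition sigma_gauss (mu i j : nat) : gauss :=
  match mu, i, j with
  | 0, 0, 0 => (1, 0)%Z | 0, 1, 1 => (1, 0)%Z
  | 1, 0, 1 => (1, 0)%Z | 1, 1, 0 => (1, 0)%Z
  | 2, 0, 1 => (0, -1)%Z | 2, 1, 0 => (0, 1)%Z
  | 3, 0, 0 => (1, 0)%Z | 3, 1, 1 => (-1, 0)%Z
  | _, _, _ => (0, 0)%Z
  end.
Definition sigmat_gauss (mu i j : nat) : gauss :=
  if mu == 0 then sigma_gauss mu i j else gauss_opp (sigma_gauss mu i j).
Definition gammaU_gauss (mu a b : nat) : gauss :=
  if (a < 2) && (2 <= b) then sigmat_gauss mu a (b - 2)
  else if (2 <= a) && (b < 2) then sigma_gauss mu (a - 2) b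
  else (0, 0)%Z.
Definition eps2_Z (i j : nat) : Z :=
  match i, j with 0, 1 => 1%Z | 1, 0 => (-1)%Z | _, _ => 0%Z end.
Definition epsB_Z (a b : nat) : Z :=
  if (a < 2) && (b < 2) then eps2_Z a b
  else if (2 <= a) && (2 <= b) then (- eps2_Z (a - 2) (b - 2))%Z
  else 0%Z.
Definition gammaL_gauss (mu c b : nat) : gauss :=
  gauss_sum [seq gauss_scale (epsB_Z a c) (gammaU_gauss mu a b) | a : 'I_4 <- ord4].
Definition eta_Z (mu : nat) : Z := if mu == 0 then 1%Z else (-1)%Z.
Definition beta4_gauss (a b c d : nat) : gauss :=
  gauss_sum [seq gauss_mul (gauss_conj (gauss_scale (eta_Z mu) (gammaL_gauss mu a b)))
                           (gammaL_gauss mu c d) | mu : 'I_4 <- ord4].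
Definition beta4_Z (a b c d : nat) : Z := Z.div (beta4_gauss a b c d).1 2.
Definition beta2_Z (a b : nat) : Z := if (a == b + 2) || (b == a + 2) then 1%Z else 0%Z.

Lemma beta4_gauss_even_real :
  all (fun a : 'I_4 => all (fun b : 'I_4 => all (fun c : 'I_4 => all (fun d : 'I_4 =>
    Z.eqb (beta4_gauss a b c d).1 (2 * beta4_Z a b c d) && Z.eqb (beta4_gauss a b c d).2 0)
  ord4) ord4) ord4) ord4.
Proof. by vm_compute. Qed.

Definition psi_spoly (a A : nat) : spoly := [:: (1%Z, bit 24 (3 * a + A))].
Definition psibar_spoly (a A : nat) : spoly := [:: (1%Z, bit 24 (12 + 3 * a + A))].
Definition J_spoly (a b : nat) : spoly :=
  sum_spoly ord3 (fun A => mul_raw (psibar_spoly a A) (psi_spoly b A)).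

(* The test comes first so that summands with a vanishing coefficient are never computed. *)
Definition X2_summand (a b c d e f : nat) : spoly :=
  let k := (beta4_Z b c e f * beta2_Z a d)%Z in
  if Z.eqb k 0 then [::] else
  scale_spoly k (mul_raw (mul_raw (J_spoly a d) (J_spoly b e)) (J_spoly c f)
                 ++ scale_spoly 2 (mul_raw (mul_raw (J_spoly a e) (J_spoly b f)) (J_spoly c d))).

Definition X2_spoly : spoly :=
  normalize (scale_spoly 4
    (sum_spoly ord4 (fun a => sum_spoly ord4 (fun b => sum_spoly ord4 (fun c =>
     sum_spoly ord4 (fun d => sum_spoly ord4 (fun e => sum_spoly ord4 (fun f =>
     X2_summand a b c d e f)))))))).

Definition top_spoly : spoly :=
  foldr mul_spoly one_spoly
    ([seq psi_spoly a A | a : 'I_4 <- ord4, A : 'I_3 <- ord3] ++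
     [seq psibar_spoly a A | a : 'I_4 <- ord4, A : 'I_3 <- ord3]).

Lemma X2_spoly_pow4 :
  iter 4 (mul_spoly X2_spoly) one_spoly = [:: (16307453952%Z, nseq 24 true)].
Proof. by vm_compute. Qed.

Lemma top_spoly_val : top_spoly = [:: (1%Z, nseq 24 true)].
Proof. by vm_compute. Qed.

Local Open Scope ring_scope.

Section Soundness.
Variable C : numClosedFieldType.
Local Notation Lam := {ffun {set 'I_24} -> C}.

Definition ofZ (z : Z) : C := (int_of_Z z)%:~R.

Lemma ofZD x y : ofZ (x + y)%Z = ofZ x + ofZ y.
Proof. by rewrite /ofZ -intrD; congr intmul; exact: (raddfD int_of_Z x y). Qed.

Lemma ofZM x y : ofZ (x * y)%Z = ofZ x * ofZ y.
Proof. by rewrite /ofZ -intrM; congr intmul; exact: (rmorphM int_of_Z x y). Qed.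

Lemma ofZN x : ofZ (- x)%Z = - ofZ x.
Proof. by rewrite /ofZ -mulrNz; congr intmul; exact: (raddfN int_of_Z x). Qed.

Lemma ofZB x y : ofZ (x - y)%Z = ofZ x - ofZ y.
Proof. by rewrite /Z.sub ofZD ofZN. Qed.

Lemma ofZ0 : ofZ 0 = 0. Proof. by []. Qed.
Lemma ofZ1 : ofZ 1 = 1. Proof. by []. Qed.
Lemma ofZN1 : ofZ (-1) = -1. Proof. by []. Qed.
Lemma ofZ2 : ofZ 2 = 2. Proof. by []. Qed.

Lemma ofZ_real x : ofZ x \is Num.real.
Proof. exact: realz. Qed.

Lemma ofZ_pos_neq0 p : ofZ (Zpos p) != 0.
Proof. by rewrite /ofZ /= pnatr_eq0 -lt0n; apply/ltP; apply: Pos2Nat.is_pos. Qed.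

Definition monomial (S : {set 'I_24}) : Lam := [ffun T => if T == S then 1 else 0].

Lemma gscale_sumr k I (r : seq I) (F : I -> Lam) :
  gscale k (\sum_(i <- r) F i) = \sum_(i <- r) gscale k (F i).
Proof.
apply/ffunP => S; rewrite ffunE !sum_ffunE mulr_sumr.
by apply: eq_bigr => i _; rewrite ffunE.
Qed.

Lemma gscaleDl a b (x : Lam) : gscale (a + b) x = gscale a x + gscale b x.
Proof. by apply/ffunP => S; rewrite !ffunE mulrDl. Qed.

Lemma gscaleA a b (x : Lam) : gscale a (gscale b x) = gscale (a * b) x.
Proof. by apply/ffunP => S; rewrite !ffunE mulrA. Qed.

Lemma gscale0 (x : Lam) : gscale 0 x = 0.
Proof. by apply/ffunP => S; rewrite !ffunE mul0r. Qed.

Lemma gscaler0 k : gscale k (0 : Lam) = 0.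
Proof. by apply/ffunP => S; rewrite !ffunE mulr0. Qed.

Lemma gscale1 (x : Lam) : gscale 1 x = x.
Proof. by apply/ffunP => S; rewrite !ffunE mul1r. Qed.

Lemma gmul_suml I (r : seq I) (F : I -> Lam) (y : Lam) :
  gmul (\sum_(i <- r) F i) y = \sum_(i <- r) gmul (F i) y.
Proof.
apply/ffunP => S; rewrite ffunE sum_ffunE.
under eq_bigr do rewrite sum_ffunE mulr_sumr mulr_suml.
by rewrite exchange_big; apply: eq_bigr => i _; rewrite ffunE.
Qed.

Lemma gmul_sumr I (r : seq I) (F : I -> Lam) (x : Lam) :
  gmul x (\sum_(i <- r) F i) = \sum_(i <- r) gmul x (F i).
Proof.
apply/ffunP => S; rewrite ffunE sum_ffunE.
under eq_bigr do rewrite sum_ffunE mulr_sumr.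
by rewrite exchange_big; apply: eq_bigr => i _; rewrite ffunE.
Qed.

Lemma gmul_scalel k (x y : Lam) : gmul (gscale k x) y = gscale k (gmul x y).
Proof.
apply/ffunP => S; rewrite !ffunE mulr_sumr; apply: eq_bigr => A _.
by rewrite ffunE mulrCA !mulrA.
Qed.

Lemma gmul_scaler k (x y : Lam) : gmul x (gscale k y) = gscale k (gmul x y).
Proof.
apply/ffunP => S; rewrite !ffunE mulr_sumr; apply: eq_bigr => A _.
by rewrite ffunE; ring.
Qed.

Lemma gmul_monomial A B : gmul (monomial A) (monomial B) =
  if [disjoint A & B] then gscale (gsign C A B) (monomial (A :|: B)) else 0.
Proof.
apply/ffunP => S; rewrite !ffunE.
have off_A A' : A' != A -> gsign C A' (S :\: A') * monomial A A' * monomial B (S :\: A') = 0.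
  by move/negbTE => nA'A; rewrite ffunE nA'A mulr0 mul0r.
have [sAS|nsAS] := boolP (A \subset S); last first.
  rewrite big1 => [|A' sA'S]; last by apply: off_A; apply: contraNneq nsAS => <-.
  case: ifP => _; rewrite ?ffunE //; case: eqP => [defS|]; last by rewrite mulr0.
  by move: nsAS; rewrite defS subsetUl.
rewrite (bigD1 A) //= big1 ?addr0 => [|A' /andP[_]]; last exact: off_A.
rewrite !ffunE eqxx mulr1.
have [dAB|ndAB] := boolP [disjoint A & B]; last first.
  rewrite ffunE; case: eqP => [defB|]; last by rewrite mulr0.
  by case/negP: ndAB; rewrite -defB -setI_eq0 setDE setICA setICr setI0.
have dBA : [disjoint B & A] by rewrite disjoint_sym.
have -> : (S :\: A == B) = (S == A :|: B).
  apply/eqP/eqP => [<-|->]; first by rewrite -{1}(setID S A) (setIidPr sAS).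
  by rewrite setDUl setDv set0U; apply/setDidPl.
rewrite !ffunE; case: eqP => [->|_]; last by rewrite !mulr0.
by rewrite setDUl setDv set0U (setDidPl dBA) !mulr1.
Qed.

Definition lam_of (p : spoly) : Lam :=
  \sum_(x <- p) gscale (ofZ x.1) (monomial (set_of_bits 24 x.2)).

Lemma lam_of_cons x p :
  lam_of (x :: p) = gscale (ofZ x.1) (monomial (set_of_bits 24 x.2)) + lam_of p.
Proof. exact: big_cons. Qed.

Lemma lam_of_cat p q : lam_of (p ++ q) = lam_of p + lam_of q.
Proof. exact: big_cat. Qed.

Lemma lam_of_single k s : lam_of [:: (k, s)] = gscale (ofZ k) (monomial (set_of_bits 24 s)).
Proof. by rewrite lam_of_cons /lam_of big_nil addr0. Qed.

Lemma gsign_bits s t : gsign C (set_of_bits 24 s) (set_of_bits 24 t) = ofZ (sign_bits s t).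
Proof. by rewrite /gsign card_inversions -signr_odd /sign_bits; case: odd. Qed.

Lemma gmul_term x y :
  gmul (gscale (ofZ x.1) (monomial (set_of_bits 24 x.2)))
       (gscale (ofZ y.1) (monomial (set_of_bits 24 y.2))) =
  gscale (ofZ (mul_term x y).1) (monomial (set_of_bits 24 (mul_term x y).2)).
Proof.
rewrite gmul_scalel gmul_scaler gmul_monomial /mul_term -disjoint_bitsE.
case: ifP => _; cbn [fst snd]; last by rewrite gscale0 !gscaler0.
rewrite !gscaleA set_of_or_bits gsign_bits !ofZM; congr gscale; ring.
Qed.

Lemma lam_of_mul_raw p q : lam_of (mul_raw p q) = gmul (lam_of p) (lam_of q).
Proof.
rewrite /lam_of big_allpairs_dep gmul_suml; apply: eq_bigr => x _.
by rewrite gmul_sumr; apply: eq_bigr => y _; rewrite gmul_term.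
Qed.

Lemma lam_of_filter_nonzero p : lam_of (filter nonzero_term p) = lam_of p.
Proof.
rewrite /lam_of big_filter big_mkcond; apply: eq_bigr => x _.
by rewrite /nonzero_term; case: Z.eqb_spec => [->|]; rewrite ?gscale0.
Qed.

Lemma lam_of_perm p q : perm_eq p q -> lam_of p = lam_of q.
Proof. exact: perm_big. Qed.

Lemma lam_of_collect x p : lam_of (collect x p) = lam_of (x :: p).
Proof.
elim: p x => [//|y p IHp] x /=.
case: eqP => [eq_xy|_]; last by rewrite !lam_of_cons IHp lam_of_cons.
by rewrite IHp !lam_of_cons /= ofZD gscaleDl eq_xy addrA.
Qed.

Lemma lam_of_normalize p : lam_of (normalize p) = lam_of p.
Proof.
rewrite /normalize lam_of_filter_nonzero -[RHS]lam_of_filter_nonzero.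
rewrite -[RHS](lam_of_perm (permEl (perm_sort (fun x y : Z * seq bool => bits_le x.2 y.2) _))).
by case: sort => [//|x p']; rewrite lam_of_collect.
Qed.

Lemma lam_of_mul p q : lam_of (mul_spoly p q) = gmul (lam_of p) (lam_of q).
Proof. by rewrite lam_of_normalize lam_of_mul_raw. Qed.

Lemma lam_of_scale k p : lam_of (scale_spoly k p) = gscale (ofZ k) (lam_of p).
Proof.
rewrite /lam_of big_map gscale_sumr; apply: eq_bigr => x _.
by rewrite ofZM gscaleA.
Qed.

Lemma lam_of_sum I (s : seq I) (F : I -> spoly) :
  lam_of (sum_spoly s F) = \sum_(i <- s) lam_of (F i).
Proof. by rewrite /lam_of big_flatten big_map. Qed.

Lemma lam_of_sum_ord4 (F : 'I_4 -> spoly) :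
  lam_of (sum_spoly ord4 F) = \sum_(i < 4) lam_of (F i).
Proof. by rewrite lam_of_sum -enum_ord4 big_enum. Qed.

Lemma lam_of_one : lam_of one_spoly = gone C.
Proof. by rewrite lam_of_single set_of_bits0 gscale1; apply/ffunP => S; rewrite !ffunE. Qed.

Lemma lam_of_bit (i : 'I_24) : lam_of [:: (1%Z, bit 24 i)] = gen C i.
Proof. by rewrite lam_of_single set_of_bit gscale1; apply/ffunP => S; rewrite !ffunE. Qed.

Lemma lam_of_psi (a : 'I_4) (A : 'I_3) : lam_of (psi_spoly a A) = psi C a A.
Proof.
rewrite /psi -lam_of_bit inordK //.
by have := ltn_ord a; have := ltn_ord A; lia.
Qed.

Lemma lam_of_psibar (a : 'I_4) (A : 'I_3) : lam_of (psibar_spoly a A) = psibar C a A.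
Proof.
rewrite /psibar -lam_of_bit inordK //.
by have := ltn_ord a; have := ltn_ord A; lia.
Qed.

Lemma lam_of_J (a b : 'I_4) : lam_of (J_spoly a b) = J C a b.
Proof.
rewrite lam_of_sum -enum_ord3 big_enum; apply: eq_bigr => A _.
by rewrite lam_of_mul_raw lam_of_psi lam_of_psibar.
Qed.

Definition of_gauss (x : gauss) : C := ofZ x.1 + ofZ x.2 * 'i.

Lemma of_gauss0 : of_gauss (0, 0)%Z = 0.
Proof. by rewrite /of_gauss ofZ0 mul0r addr0. Qed.

Lemma of_gauss_add x y : of_gauss (gauss_add x y) = of_gauss x + of_gauss y.
Proof. by rewrite /of_gauss /= !ofZD; ring. Qed.

Lemma of_gauss_mul x y : of_gauss (gauss_mul x y) = of_gauss x * of_gauss y.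
Proof.
have ii : 'i * 'i = -1 :> C by rewrite -expr2 sqrCi.
rewrite /of_gauss /= ofZB !ofZD !ofZM.
transitivity (ofZ x.1 * ofZ y.1 + ofZ x.2 * ofZ y.2 * ('i * 'i)
              + (ofZ x.1 * ofZ y.2 + ofZ x.2 * ofZ y.1) * 'i); first by rewrite ii; ring.
ring.
Qed.

Lemma of_gauss_scale k x : of_gauss (gauss_scale k x) = ofZ k * of_gauss x.
Proof. by rewrite /of_gauss /= !ofZM; ring. Qed.

Lemma of_gauss_opp x : of_gauss (gauss_opp x) = - of_gauss x.
Proof. by rewrite /of_gauss /= !ofZN; ring. Qed.

Lemma of_gauss_conj x : Num.conj (of_gauss x) = of_gauss (gauss_conj x).
Proof. by rewrite /of_gauss /= mulrC conjC_rect ?ofZ_real // ofZN; ring. Qed.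

Lemma of_gauss_sum I (s : seq I) (F : I -> gauss) :
  \sum_(i <- s) of_gauss (F i) = of_gauss (gauss_sum (map F s)).
Proof.
elim: s => [|i s IHs]; first by rewrite big_nil of_gauss0.
by rewrite big_cons IHs of_gauss_add.
Qed.

Lemma sigma_of_gauss mu i j : sigma C mu i j = of_gauss (sigma_gauss mu i j).
Proof.
rewrite /sigma /sigma_gauss /of_gauss.
by case: mu => [|[|[|[|mu]]]]; case: i => [|[|i]]; case: j => [|[|j]];
  rewrite ?ofZ0 ?ofZ1 ?ofZN1; ring.
Qed.

Lemma sigmat_of_gauss mu i j : sigmat C mu i j = of_gauss (sigmat_gauss mu i j).
Proof. by rewrite /sigmat /sigmat_gauss; case: eqP => _; rewrite ?of_gauss_opp sigma_of_gauss. Qed.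

Lemma gammaU_of_gauss (mu a b : 'I_4) : gammaU C mu a b = of_gauss (gammaU_gauss mu a b).
Proof.
rewrite /gammaU /gammaU_gauss; case: ifP => _; first exact: sigmat_of_gauss.
by case: ifP => _; rewrite ?sigma_of_gauss ?of_gauss0.
Qed.

Lemma epsB_ofZ (a b : 'I_4) : epsB C a b = ofZ (epsB_Z a b).
Proof.
have eps2E i j : eps2 C i j = ofZ (eps2_Z i j) by case: i => [|[|i]]; case: j => [|[|j]].
rewrite /epsB /epsB_Z; case: ifP => _; first exact: eps2E.
by case: ifP => _; rewrite ?ofZN ?eps2E.
Qed.

Lemma gammaL_of_gauss (mu c b : 'I_4) : gammaL C mu c b = of_gauss (gammaL_gauss mu c b).
Proof.
rewrite /gammaL /gammaL_gauss -of_gauss_sum -enum_ord4 big_enum; apply: eq_bigr => a _.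
by rewrite gammaU_of_gauss epsB_ofZ of_gauss_scale mulrC.
Qed.

Lemma beta4_ofZ (a b c d : 'I_4) : beta4 C a b c d = ofZ (beta4_Z a b c d).
Proof.
have -> : beta4 C a b c d = 2^-1 * of_gauss (beta4_gauss a b c d).
  rewrite /beta4 /beta4_gauss -of_gauss_sum -enum_ord4 big_enum; congr (_ * _).
  apply: eq_bigr => mu _.
  have etaE : Defs.eta C mu = ofZ (eta_Z mu) by rewrite /Defs.eta /eta_Z; case: eqP.
  by rewrite /gammaLlow !gammaL_of_gauss etaE -of_gauss_scale of_gauss_conj of_gauss_mul.
have /allP/(_ a) := beta4_gauss_even_real; rewrite -enum_ord4 mem_enum => /(_ isT).
move=> /allP/(_ b (mem_enum _ b)) /allP/(_ c (mem_enum _ c)) /allP/(_ d (mem_enum _ d)).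
case: (beta4_gauss a b c d) => x y; cbn [fst snd] => /andP[/Z.eqb_spec -> /Z.eqb_spec ->].
by rewrite /of_gauss ofZ0 mul0r addr0 ofZM ofZ2 mulrA mulVf ?mul1r // pnatr_eq0.
Qed.

Lemma beta2_ofZ (a d : 'I_4) : beta2 C a d = ofZ (beta2_Z a d).
Proof. by rewrite /beta2 /beta2_Z; case: ifP. Qed.

Lemma lam_of_X2_summand (a b c d e f : 'I_4) :
  lam_of (X2_summand a b c d e f) =
  gscale (beta4 C b c e f * beta2 C a d)
    (gmul (gmul (J C a d) (J C b e)) (J C c f)
     + gscale 2 (gmul (gmul (J C a e) (J C b f)) (J C c d))).
Proof.
rewrite beta4_ofZ beta2_ofZ -ofZM /X2_summand.
case: Z.eqb_spec => [->|_]; first by rewrite ofZ0 gscale0 /lam_of big_nil.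
by rewrite lam_of_scale lam_of_cat lam_of_scale ofZ2 !lam_of_mul_raw !lam_of_J.
Qed.

Lemma lam_of_X2 : lam_of X2_spoly = X2 C.
Proof.
rewrite /X2_spoly lam_of_normalize lam_of_scale; congr gscale.
rewrite !lam_of_sum_ord4; do 6!(apply: eq_bigr => ? _; rewrite ?lam_of_sum_ord4).
exact: lam_of_X2_summand.
Qed.

Lemma lam_of_pow n p : lam_of (iter n (mul_spoly p) one_spoly) = gpow n (lam_of p).
Proof. by elim: n => [|n IHn] /=; rewrite ?lam_of_one // lam_of_mul IHn. Qed.

Lemma lam_of_foldr_mul (s : seq spoly) :
  lam_of (foldr mul_spoly one_spoly s) = foldr (@gmul C) (gone C) (map lam_of s).
Proof. by elim: s => [|p s IHs] /=; rewrite ?lam_of_one // lam_of_mul IHs. Qed.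

Lemma lam_of_top : lam_of top_spoly = topprod C.
Proof.
rewrite /topprod lam_of_foldr_mul map_cat !map_allpairs enum_ord4 enum_ord3.
by congr (foldr _ _ (_ ++ _)); apply: eq_allpairs => a A; rewrite ?lam_of_psi ?lam_of_psibar.
Qed.

End Soundness.

Theorem lemma1 (C : numClosedFieldType) :
  exists c : C, c != 0 /\ gpow 4 (X2 C) = gscale c (topprod C).
Proof.
exists (ofZ C 16307453952); split; first exact: ofZ_pos_neq0.
rewrite -lam_of_X2 -lam_of_pow X2_spoly_pow4 -lam_of_top top_spoly_val.
by rewrite !lam_of_single gscale1.
Qed.
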